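(* Let $\mathcal F|\mathcal G$ be a biflag with biflats indexed $F_1|G_1,\dots,F_k|G_k$ so that $F_1\subseteq\cdots\subseteq F_k$, $G_1\supseteq\cdots\supseteq G_k$, with $G_{k+1}=\emptyset$, and let $l$ be the largest index with $F_l\neq E$ ($l=0$ and $F_0=\emptyset$, $G_0=E$ if there is none). If $c\in E$ and $c\notin F_l$, then in $A_{M,M^\perp}$ \[ x_{\mathcal F|\mathcal G}\,\gamma_c=\sum_{F|G}x_{\mathcal F|\mathcal G\,\cup\,\{F|G\}}, \] the sum over biflats $F|G$ with $F_l\cup\{c\}\subseteq F\subsetneq E$ and $G_l\supseteq G\supseteq G_{l+1}$ (terms for which $\mathcal F|\mathcal G\cup\{F|G\}$ is not a biflag being zero).
   Context: Let $M$ be a matroid with no loops and no coloops on the ground set $E=\{0,1,\dots,n\}$; $M^\perp$ its dual. A biflat of $M$ is a pair $F|G$ where $F$ is a flat of $M$, $G$ is a flat of $M^\perp$, both are nonempty, they are not both equal to $E$, and $F\cup G=E$. Two biflats $F|G$, $F'|G'$ are compatible if ($F\subseteq F'$ and $G\supseteq G'$) or ($F\supseteq F'$ and $G\subseteq G'$). A biflag is a set of pairwise compatible biflats with $\bigcup_{F|G}(F\cap G)\neq E$. Conormal Chow ring: $S$ is the polynomial ring over $\mathbb R$ in variables $x_{F|G}$, one per biflat; $x_{\mathcal F|\mathcal G}=\prod_{F|G\in\mathcal F|\mathcal G}x_{F|G}$ for a set of biflats. For $i\in E$, $\gamma_i=\sum_{i\in F,\,F\neq E}x_{F|G}$, $\bar\gamma_i=\sum_{i\in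 G,\,G\neq E}x_{F|G}$. $I$ is generated by the $x_{\mathcal F|\mathcal G}$ for sets of biflats that are not biflags, $J$ by all $\gamma_i-\gamma_j$, $\bar\gamma_i-\bar\gamma_j$; $A_{M,M^\perp}=S/(I+J)$. *)

From HB Require Import structures.
From mathcomp Require Import all_boot all_order all_algebra.
From mathcomp Require Import reals.
From mathcomp Require Import mpoly.

Set Implicit Arguments.
Unset Strict Implicit.
Unset Printing Implicit Defensive.

Import GRing.Theory.
Local Open Scope ring_scope.

Record matroid (T : finType) := Matroid {
  mrank : {set T} -> nat;
  mrank_le_card : forall A, (mrank A <= #|A|)%N;
  mrank_mono : forall A B : {set T}, A \subset B -> (mrank A <= mrank B)%N;
  mrank_submod : forall A B : {set T},
    (mrank (A :|: B) + mrank (A :&: B) <= mrank A + mrank B)%N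
}.

Section MatroidDefs.
Variable T : finType.
Variable M : matroid T.

Definition dual_rank (A : {set T}) : nat :=
  (#|A| + mrank M (~: A) - mrank M setT)%N.

Definition is_flat_r (r : {set T} -> nat) (F : {set T}) : bool :=
  [forall x, (x \notin F) ==> (r F < r (x |: F))%N].

Definition is_flat (F : {set T}) : bool := is_flat_r (mrank M) F.
Definition is_dual_flat (G : {set T}) : bool := is_flat_r dual_rank G.

Definition is_loop (x : T) : Prop := mrank M [set x] = 0%N.
(* a coloop of M is a loop of M^perp *)
Definition is_coloop (x : T) : Prop := dual_rank [set x] = 0%N.

Definition loopless_coloopless : Prop :=
  forall x : T, ~ is_loop x /\ ~ is_coloop x.

Definition is_biflat (p : {set T} * {set T}) : bool :=
  [&& is_flat p.1, is_dual_flat p.2, p.1 != set0, p.2 != set0,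
      ~~ ((p.1 == setT) && (p.2 == setT)) & p.1 :|: p.2 == setT].

Definition biflat := {p : {set T} * {set T} | is_biflat p}.

Definition bF (b : biflat) : {set T} := (val b).1.
Definition bG (b : biflat) : {set T} := (val b).2.

Definition compatible (b b' : biflat) : bool :=
  ((bF b \subset bF b') && (bG b' \subset bG b)) ||
  ((bF b' \subset bF b) && (bG b \subset bG b')).

Definition is_biflag (S : {set biflat}) : bool :=
  [forall b in S, forall b' in S, compatible b b'] &&
  ((\bigcup_(b in S) (bF b :&: bG b)) != setT).

(* F_l, G_l, G_{l+1} for a biflag S (which is a chain F_1 ⊆ ... ⊆ F_k,
   G_1 ⊇ ... ⊇ G_k).  l is the largest index with F_l != E:
   F_l = largest F_i != E  (= union of those, or ∅ if none),
   G_l = corresponding G   (= intersection of those G_i, or E if none),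
   G_{l+1} = G of the next biflat, whose F is E (= union of the G_i with
   F_i = E, or ∅ if none). *)
Definition Fl (S : {set biflat}) : {set T} :=
  \bigcup_(b in S | bF b != setT) bF b.
Definition Gl (S : {set biflat}) : {set T} :=
  \bigcap_(b in S | bF b != setT) bG b.
Definition Gl1 (S : {set biflat}) : {set T} :=
  \bigcup_(b in S | bF b == setT) bG b.

Variable R : realType.

Definition nvars := #|{: biflat}|.
Definition Spoly := {mpoly R[nvars]}.

Definition xvar (b : biflat) : Spoly := 'X_(enum_rank b).

Definition xmon (S : {set biflat}) : Spoly := \prod_(b in S) xvar b.

Definition gam (i : T) : Spoly :=
  \sum_(b : biflat | (i \in bF b) && (bF b != setT)) xvar b.
Definition gambar (i : T) : Spoly :=
  \sum_(b : biflat | (i \in bG b) && (bG b != setT)) xvar b.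

Definition IJ_gen (g : Spoly) : Prop :=
  (exists S : {set biflat}, ~~ is_biflag S /\ g = xmon S) \/
  (exists i j : T, g = gam i - gam j) \/
  (exists i j : T, g = gambar i - gambar j).

Definition in_ideal (gen : Spoly -> Prop) (p : Spoly) : Prop :=
  exists s : seq (Spoly * Spoly),
    (forall q, q \in s -> gen q.2) /\ p = \sum_(q <- s) q.1 * q.2.

Definition eq_in_A (p q : Spoly) : Prop := in_ideal IJ_gen (p - q).

End MatroidDefs.

From HB Require Import structures.
From mathcomp Require Import all_boot all_order all_algebra.
From mathcomp Require Import reals.
From mathcomp Require Import mpoly.
Set Implicit Arguments.
Unset Strict Implicit.
Unset Printing Implicit Defensive.
Local Open Scope ring_scope.
Import GRing.Theory.

(* Expanding gamma_c = sum of x_{F|G} over the biflats with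
   c in F != E, the product x_{S} gamma_c becomes the sum of the monomials
   x_{S u {b}} over those biflats b; none of them lies in S, because c is not
   in F_l.  We show that whenever S u {b} is still a biflag, b automatically
   satisfies F_l u {c} <= F, G_l >= G >= G_{l+1}: compatibility with the
   biflats of S whose F differs from E forces them below b (b cannot lie
   below them since it contains c), and compatibility with those whose F is
   E forces b below them.  Hence every term of the expansion that is not in
   the range of the claimed sum is the monomial of a non-biflag, i.e. a
   generator of the ideal I, and the difference of the two sides is a sum of
   generators of I + J. *)

Section IdealSpan.
Variables (A : comPzRingType) (gen : A -> Prop).

Definition ideal_span (p : A) : Prop :=
  exists s : seq (A * A),
    (forall q, q \in s -> gen q.2) /\ p = \sum_(q <- s) q.1 * q.2.

Lemma ideal_span0 : ideal_span 0.
Proof. by exists [::]; rewrite big_nil. Qed.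

Lemma ideal_spanD p q : ideal_span p -> ideal_span q -> ideal_span (p + q).
Proof.
move=> [s1 [gen1 ->]] [s2 [gen2 ->]]; exists (s1 ++ s2); split.
  by move=> x; rewrite mem_cat => /orP [/gen1|/gen2].
by rewrite big_cat.
Qed.

Lemma ideal_span_gen g : gen g -> ideal_span g.
Proof.
move=> gen_g; exists [:: (1, g)]; split; last by rewrite big_seq1 mul1r.
by move=> x; rewrite inE => /eqP ->.
Qed.

Lemma ideal_span_sum_gen (I : finType) (P : pred I) (F : I -> A) :
  (forall i, P i -> gen (F i)) -> ideal_span (\sum_(i | P i) F i).
Proof.
move=> genF; apply: (big_ind ideal_span); [exact: ideal_span0|exact: ideal_spanD|].
by move=> i /genF /ideal_span_gen.
Qed.
End IdealSpan.

Section BiflagExtension.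
Variables (T : finType) (M : matroid T) (R : realType).
Variables (S : {set biflat M}) (c : T).
Hypothesis c_notin_Fl : c \notin Fl S.

Definition in_gam (b : biflat M) : bool := (c \in bF b) && (bF b != setT).

Definition admissible (b : biflat M) : bool :=
  [&& c |: Fl S \subset bF b, bF b != setT, bG b \subset Gl S & Gl1 S \subset bG b].

Lemma admissible_in_gam (b : biflat M) : admissible b -> in_gam b.
Proof.
case/and4P=> cFl_b Fb _ _; rewrite /in_gam Fb andbT.
by move: cFl_b; rewrite subUset sub1set => /andP [].
Qed.

Lemma notin_low_biflat (s : biflat M) : s \in S -> bF s != setT -> c \notin bF s.
Proof.
move=> sS Fs; apply: contra c_notin_Fl => cFs.
by apply: (subsetP (bigcup_sup s _)); rewrite ?sS.
Qed.

Lemma in_gam_notin (b : biflat M) : in_gam b -> b \notin S.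
Proof.
case/andP=> cFb Fb; apply/negP=> bS.
by move: (notin_low_biflat bS Fb); rewrite cFb.
Qed.

Lemma xmon_gam :
  xmon R S * gam M R c = \sum_(b | in_gam b) xmon R (b |: S).
Proof.
rewrite /gam mulr_sumr; apply: eq_bigr => b /in_gam_notin bNS.
by rewrite /xmon big_setU1 //= mulrC.
Qed.

Lemma compatible_low (b s : biflat M) : c \in bF b -> s \in S -> bF s != setT ->
  compatible b s -> (bF s \subset bF b) && (bG b \subset bG s).
Proof.
move=> cFb sS Fs /orP [/andP [Fbs _]|//].
by move: (notin_low_biflat sS Fs); rewrite (subsetP Fbs).
Qed.

Lemma compatible_top (b s : biflat M) : bF b != setT -> bF s = setT ->
  compatible b s -> bG s \subset bG b.
Proof.
move=> Fb Fs /orP [/andP [_ //]|/andP [FsFb _]].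
by move: Fb; rewrite Fs in FsFb; rewrite eqEsubset subsetT FsFb.
Qed.

Lemma biflag_extension_admissible (b : biflat M) :
  in_gam b -> is_biflag (b |: S) -> admissible b.
Proof.
case/andP=> cFb Fb /andP [/forall_inP comp_all _].
have comp s : s \in S -> compatible b s.
  by move=> sS; apply: (forall_inP (comp_all b (setU11 _ _))); rewrite setU1r.
apply/and4P; split=> //.
- rewrite subUset sub1set cFb; apply/bigcupsP=> s /andP [sS Fs].
  by case/andP: (compatible_low cFb sS Fs (comp s sS)).
- apply/bigcapsP=> s /andP [sS Fs].
  by case/andP: (compatible_low cFb sS Fs (comp s sS)).
- apply/bigcupsP=> s /andP [sS /eqP Fs].
  exact: compatible_top Fb Fs (comp s sS).
Qed.
End BiflagExtension.

Theorem mainTheorem9 (n : nat) (M : matroid 'I_n.+1) (R : realType)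
  (HM : loopless_coloopless M)
  (S : {set biflat M}) (HS : is_biflag S)
  (c : 'I_n.+1) (Hc : c \notin Fl S) :
  @eq_in_A _ M R (@xmon _ M R S * @gam _ M R c)
    (\sum_(b : biflat M | [&& c |: Fl S \subset bF b, bF b != setT,
                              bG b \subset Gl S & Gl1 S \subset bG b])
        @xmon _ M R (b |: S)).
Proof.
rewrite /eq_in_A (xmon_gam R Hc) (bigID (admissible S c)) /=.
have -> : \sum_(b | in_gam c b && admissible S c b) xmon R (b |: S)
        = \sum_(b | admissible S c b) xmon R (b |: S).
  apply: eq_bigl=> b; apply/idP/idP=> [/andP [] //|adm_b].
  by rewrite adm_b (admissible_in_gam adm_b).
rewrite [X in X - _]addrC addrK.
(* The remaining terms are monomials of non-biflags, generators of I. *)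
apply: ideal_span_sum_gen=> b /andP [gam_b not_adm_b]; left.
exists (b |: S); split=> //.
by apply: contra not_adm_b; apply: biflag_extension_admissible.
Qed.
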